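(* Let $\Gamma$ be a group that is nilpotent of class $\le n$, let $S\subseteq\Gamma\setminus\{\mathbb{I}\}$ be a generating set, $G:=\mathrm{Cay}(\Gamma,S)$, and let $r\ge 2^{n+2}$ be an integer. Let $h\in S$ be such that $\{\mathbb{I},h\}$ is an $r$-local $2$-separator of $G$, suppose that $G$ has no $r$-local cutvertex, and suppose that $h$ is not an involution. Then there is no $g\in S$ such that $g$ traverses $\{\mathbb{I},h\}$ at $\mathbb{I}$, the word $gh^2$ strongly traverses $\{\mathbb{I},h\}$, and both words $g^{-1}h^2g^{-1}h^{-1}$ and $ghgh$ are morphemes of $\Gamma$ in $S$.
   Context: Generating sets are closed under inverses; $\mathrm{Cay}(\Gamma,S)$ is the simple graph on $\Gamma$ with edges $\{g,gs\}$. $a\equiv b$ means $a=b$ or $a=b^{-1}$; $\Gamma$ is nilpotent of class $\le n$ if $[g,h]_n=\mathbb{I}$ for all $g\not\equiv h$, where $[g,h]_1=gh^{-1}g^{-1}h$ and $[g,h]_n$ is the reduced form of $g[g,h]_{n-1}^{-1}g^{-1}[g,h]_{n-1}$. Ball $B_r(v)$: subgraph of all vertices and edges on closed walks of length $\le r$ through $v$; $v$ is an $r$-local cutvertex if $B_r(v)-v$ is disconnected. For $X=\{v_0,v_1\}$, $N(X)$ is the set of vertices outside $X$ adjacent to $X$; the connectivity graph $C_r(v_0,v_1)$ has vertex set $N(X)$, $a,b$ adjacent if for some $i$ they lie in the same component of $B_r(v_i)-v_0-v_1$; $X$ is an $r$-local $2$-separator if $C_r(v_0,v_1)$ is disconnected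 and $d_G(v_0,v_1)\le r/2$; the $r$-local components at $X$ are the components of $C_r(v_0,v_1)$. An element $g\in S$ traverses $X$ at $x\in X$ if the vertices $xg^{-1}$ and $xg$ lie in distinct $r$-local components at $X$. A traversal of $X$ is a walk whose ends lie in distinct $r$-local components at $X$ and whose internal vertices all lie in $X$; it is strong if it has exactly two internal vertices. A word $w=a_1\cdots a_k$ in $S$ strongly traverses $X$ if for some vertex $v$ the walk $v,va_1,\ldots,va_1\cdots a_k$ has a subwalk that is a strong traversal of $X$. A morpheme of $\Gamma$ in $S$ is a nonempty word in $S$ evaluating to $\mathbb{I}$ none of whose nonempty proper contiguous subwords evaluates to $\mathbb{I}$. *)

From Stdlib Require Import List Relations Arith.
Import ListNotations.
Set Implicit Arguments.

Record Group := {
  carrier :> Type;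
  mul : carrier -> carrier -> carrier;
  inv : carrier -> carrier;
  one : carrier;
  mulA : forall x y z, mul x (mul y z) = mul (mul x y) z;
  mul1g : forall x, mul one x = x;
  mulVg : forall x, mul (inv x) x = one
}.

Section Defs.
Variable G : Group.
Local Notation "x * y" := (mul G x y).
Local Notation "x ^-1" := (inv G x) (at level 3).
Local Notation e := (one G).

Definition equivg (a b : G) : Prop := a = b \/ a = b^-1.

(** itcomm k g h = [g,h]_{k+1};  [g,h]_1 = g h^-1 g^-1 h,
    [g,h]_{m+1} = g [g,h]_m^-1 g^-1 [g,h]_m  (evaluated in the group) *)
Fixpoint itcomm (k : nat) (g h : G) : G :=
  match k with
  | 0 => g * h^-1 * g^-1 * h
  | S k' => let c := itcomm k' g h in g * c^-1 * g^-1 * c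
  end.

Definition nilpotent_le (n : nat) : Prop :=
  forall g h : G, ~ equivg g h -> itcomm (n - 1) g h = e.

Definition eval (w : list G) : G := fold_right (fun a b => a * b) e w.

Definition generating (S : G -> Prop) : Prop :=
  (forall s, S s -> S s^-1) /\ forall x : G, exists w, Forall S w /\ eval w = x.

Definition cay_adj (S : G -> Prop) (x y : G) : Prop := exists s, S s /\ y = x * s.

Inductive is_walk (E : G -> G -> Prop) : list G -> Prop :=
| walk1 x : is_walk E [x]
| walkS x y p : E x y -> is_walk E (y :: p) -> is_walk E (x :: y :: p).

Definition closed_walk (E : G -> G -> Prop) (p : list G) : Prop :=
  is_walk E p /\ exists x, hd_error p = Some x /\ last p x = x.

Definition wlen (p : list G) : nat := length p - 1.

Definition ball_walk (S : G -> Prop) (r : nat) (v : G) (p : list G) : Prop :=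
  closed_walk (cay_adj S) p /\ wlen p <= r /\ In v p.

Definition ballV (S : G -> Prop) (r : nat) (v u : G) : Prop :=
  exists p, ball_walk S r v p /\ In u p.

Definition ballE (S : G -> Prop) (r : nat) (v a b : G) : Prop :=
  exists p, ball_walk S r v p /\
    exists l1 l2, p = l1 ++ a :: b :: l2 \/ p = l1 ++ b :: a :: l2.

Definition ballV_minus (S : G -> Prop) (r : nat) (v : G) (Z : G -> Prop) (u : G) :=
  ballV S r v u /\ ~ Z u.

Definition ballE_minus (S : G -> Prop) (r : nat) (v : G) (Z : G -> Prop) (a b : G) :=
  ballE S r v a b /\ ~ Z a /\ ~ Z b.

Definition same_comp (V : G -> Prop) (E : G -> G -> Prop) (a b : G) : Prop :=
  V a /\ V b /\ clos_refl_trans G (fun x y => V x /\ V y /\ E x y) a b.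

Definition local_cutvertex (S : G -> Prop) (r : nat) (v : G) : Prop :=
  let V := ballV_minus S r v (fun z => z = v) in
  let E := ballE_minus S r v (fun z => z = v) in
  exists a b, V a /\ V b /\ ~ same_comp V E a b.

Definition inX (v0 v1 z : G) : Prop := z = v0 \/ z = v1.

Definition nbhd (S : G -> Prop) (v0 v1 u : G) : Prop :=
  ~ inX v0 v1 u /\ (cay_adj S v0 u \/ cay_adj S v1 u).

Definition C_adj (S : G -> Prop) (r : nat) (v0 v1 a b : G) : Prop :=
  nbhd S v0 v1 a /\ nbhd S v0 v1 b /\
  exists vi, inX v0 v1 vi /\
    same_comp (ballV_minus S r vi (inX v0 v1)) (ballE_minus S r vi (inX v0 v1)) a b.

Definition C_conn (S : G -> Prop) (r : nat) (v0 v1 a b : G) : Prop :=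
  nbhd S v0 v1 a /\ nbhd S v0 v1 b /\ clos_refl_trans G (C_adj S r v0 v1) a b.

Definition distinct_comp (S : G -> Prop) (r : nat) (v0 v1 a b : G) : Prop :=
  nbhd S v0 v1 a /\ nbhd S v0 v1 b /\ ~ C_conn S r v0 v1 a b.

Definition dist_le_half (S : G -> Prop) (r : nat) (v0 v1 : G) : Prop :=
  exists p, is_walk (cay_adj S) (v0 :: p) /\ last (v0 :: p) v0 = v1 /\ 2 * length p <= r.

Definition local_2sep (S : G -> Prop) (r : nat) (v0 v1 : G) : Prop :=
  (exists a b, nbhd S v0 v1 a /\ nbhd S v0 v1 b /\ ~ C_conn S r v0 v1 a b)
  /\ dist_le_half S r v0 v1.

Definition traverses_at (S : G -> Prop) (r : nat) (v0 v1 g x : G) : Prop :=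
  distinct_comp S r v0 v1 (x * g^-1) (x * g).

Fixpoint word_walk (v : G) (w : list G) : list G :=
  match w with
  | [] => [v]
  | a :: w' => v :: word_walk (v * a) w'
  end.

Definition strong_traversal (S : G -> Prop) (r : nat) (v0 v1 : G) (q : list G) : Prop :=
  exists a x y b, q = [a; x; y; b] /\ is_walk (cay_adj S) q /\
    inX v0 v1 x /\ inX v0 v1 y /\ distinct_comp S r v0 v1 a b.

Definition strongly_traverses (S : G -> Prop) (r : nat) (v0 v1 : G) (w : list G) : Prop :=
  exists v l1 q l2, word_walk v w = l1 ++ q ++ l2 /\ strong_traversal S r v0 v1 q.

Definition morpheme (S : G -> Prop) (w : list G) : Prop :=
  w <> [] /\ Forall S w /\ eval w = e /\
  forall l1 m l2, w = l1 ++ m ++ l2 -> m <> [] -> (l1 <> [] \/ l2 <> []) -> eval m <> e.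

End Defs.

Arguments generating {G} S.
Arguments local_2sep {G} S r v0 v1.
Arguments local_cutvertex {G} S r v.
Arguments traverses_at {G} S r v0 v1 g x.
Arguments strongly_traverses {G} S r v0 v1 w.
Arguments morpheme {G} S w.

(* The two morphemes give the relations (gh)^2 = 1 and h^3 = 1.  Under them the
   first iterated commutator is [g,h]_1 = g^2 h^-1, and the recursion defining
   [g,h]_(k+1) acts on it as conjugation by g; so every [g,h]_k is a conjugate
   of g^2 h^-1 and nilpotency forces g^2 = h.  Then g h h g = g^6 = 1 is a
   relator of length 4 <= r: the closed walk 1, g, gh, g^-1, 1 joins g to g^-1
   inside B_r(1) - {1, h}, so g does not traverse {1, h} at 1. *)
From Stdlib Require Import List Arith Lia Relations.
Import ListNotations.

Section GroupFacts.
Context {G : Group}.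
Local Notation "x * y" := (mul G x y).
Local Notation "x ^-1" := (inv G x) (at level 3).
Local Notation e := (one G).

Lemma mulKg (x y : G) : x^-1 * (x * y) = y.
Proof. rewrite (mulA G), (mulVg G), (mul1g G). reflexivity. Qed.

Lemma mulgV (x : G) : x * x^-1 = e.
Proof.
  rewrite <- (mul1g G (x * x^-1)), <- (mulVg G (x^-1)) at 1.
  rewrite <- (mulA G), (mulA G (x^-1) x), (mulVg G x), (mul1g G). apply mulVg.
Qed.

Lemma mulg1 (x : G) : x * e = x.
Proof. rewrite <- (mulVg G x), (mulA G), mulgV, (mul1g G). reflexivity. Qed.

Lemma mulKVg (x y : G) : x * (x^-1 * y) = y.
Proof. rewrite (mulA G), mulgV, (mul1g G). reflexivity. Qed.

Lemma invgK (x : G) : x^-1^-1 = x.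
Proof. rewrite <- (mulg1 (x^-1^-1)), <- (mulVg G x), mulKg. reflexivity. Qed.

Lemma mulgI (x y z : G) : x * y = x * z -> y = z.
Proof. intro Hxyz. rewrite <- (mulKg x y), Hxyz, mulKg. reflexivity. Qed.

Lemma mulIg (x y z : G) : y * x = z * x -> y = z.
Proof.
  intro Hyz. rewrite <- (mulg1 y), <- (mulg1 z), <- (mulgV x), !(mulA G), Hyz.
  reflexivity.
Qed.

Lemma eq_invg_of_mul_eq1 (x y : G) : x * y = e -> y = x^-1.
Proof. intro Hxy. apply (mulgI x). rewrite Hxy, mulgV. reflexivity. Qed.

Lemma invMg (x y : G) : (x * y)^-1 = y^-1 * x^-1.
Proof.
  symmetry. apply eq_invg_of_mul_eq1.
  rewrite <- (mulA G), mulKVg, mulgV. reflexivity.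
Qed.

Lemma invg1 : e^-1 = e.
Proof. rewrite <- (mulVg G e) at 2. rewrite mulg1. reflexivity. Qed.

End GroupFacts.

Ltac gsimpl :=
  repeat progress rewrite ?invMg, ?invgK, ?invg1, <- ?mulA, ?mulKg, ?mulKVg,
    ?mulgV, ?mulVg, ?mulg1, ?mul1g.
Tactic Notation "gsimpl" "in" hyp(H) := revert H; gsimpl; intro H.

Section IteratedCommutators.
Variable G : Group.
Local Notation "x * y" := (mul G x y).
Local Notation "x ^-1" := (inv G x) (at level 3).
Local Notation e := (one G).

Definition conjg (x y : G) : G := y^-1 * x * y.

Definition comm_step (g c : G) : G := g * c^-1 * g^-1 * c.

Lemma conjg_eq1 (x y : G) : conjg x y = e -> x = e.
Proof.
  unfold conjg. intro Hxy. apply (mulgI (y^-1)).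
  rewrite <- (mulg1 (y^-1 * x)), <- (mulgV y), (mulA G), Hxy. gsimpl. reflexivity.
Qed.

(* comm_step g is a word in g and its argument, and conjugation by g fixes g. *)
Lemma comm_step_conjg (g c : G) : comm_step g (conjg c g) = conjg (comm_step g c) g.
Proof. unfold comm_step, conjg. gsimpl. reflexivity. Qed.

Section FirstCommutatorFixed.
Variables g h : G.
Hypothesis step_conj : comm_step g (itcomm G 0 g h) = conjg (itcomm G 0 g h) g.

Lemma itcomm_succ_conjg k : itcomm G (S k) g h = conjg (itcomm G k g h) g.
Proof.
  induction k as [|k IH]; [exact step_conj|].
  change (comm_step g (itcomm G (S k) g h) = conjg (itcomm G (S k) g h) g).
  rewrite IH at 1. rewrite comm_step_conjg. reflexivity.
Qed.

Lemma itcomm_eq1_first k : itcomm G k g h = e -> itcomm G 0 g h = e.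
Proof.
  induction k as [|k IH]; [trivial|].
  rewrite itcomm_succ_conjg. intro Hk. exact (IH (conjg_eq1 _ _ Hk)).
Qed.

End FirstCommutatorFixed.

Section MorphemeRelations.
Variables g h : G.
Hypothesis ghgh : g * (h * (g * h)) = e.
Hypothesis ginv_hh_ginv_hinv : g^-1 * (h * (h * (g^-1 * h^-1))) = e.

Lemma hgh_eq_invg : h * (g * h) = g^-1.
Proof. exact (eq_invg_of_mul_eq1 _ _ ghgh). Qed.

Lemma h_cube : h * (h * h) = e.
Proof.
  pose proof (eq_invg_of_mul_eq1 _ _ ginv_hh_ginv_hinv) as Hg.
  rewrite invgK, <- hgh_eq_invg in Hg. gsimpl in Hg.
  transitivity (h * (h * (h * g)) * g^-1).
  - gsimpl. reflexivity.
  - rewrite Hg. apply mulgV.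
Qed.

Lemma h_sqr : h * h = h^-1.
Proof. exact (eq_invg_of_mul_eq1 _ _ h_cube). Qed.

Lemma h_sqr_mul x : h * (h * x) = h^-1 * x.
Proof. rewrite (mulA G), h_sqr. reflexivity. Qed.

Lemma itcomm0_eq : itcomm G 0 g h = g * (g * h^-1).
Proof.
  simpl. rewrite <- hgh_eq_invg. gsimpl. rewrite h_sqr. reflexivity.
Qed.

Lemma comm_step_itcomm0 : comm_step g (itcomm G 0 g h) = conjg (itcomm G 0 g h) g.
Proof.
  rewrite itcomm0_eq. unfold comm_step, conjg. gsimpl.
  rewrite <- hgh_eq_invg. gsimpl. rewrite h_sqr_mul. reflexivity.
Qed.

Lemma sqr_eq_of_itcomm_eq1 k : itcomm G k g h = e -> g * g = h.
Proof.
  intro Hk. pose proof (itcomm_eq1_first g h comm_step_itcomm0 k Hk) as H0.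
  rewrite itcomm0_eq in H0.
  transitivity (g * (g * h^-1) * h).
  - gsimpl. reflexivity.
  - rewrite H0. apply mul1g.
Qed.

Lemma not_equivg_of_ne1 : h <> e -> g * h <> e -> ~ equivg G g h.
Proof.
  intros Hh Hgh [Hg|Hg].
  - apply Hh. pose proof ghgh as Hhhhh.
    rewrite Hg, h_sqr_mul in Hhhhh. gsimpl in Hhhhh. exact Hhhhh.
  - apply Hgh. rewrite Hg. apply mulVg.
Qed.

Section SquareIsH.
Hypothesis gg_eq_h : g * g = h.

Lemma ghh_eq_invg : g * (h * h) = g^-1.
Proof. rewrite h_sqr, <- gg_eq_h. gsimpl. reflexivity. Qed.

Lemma ghhg_eq1 : g * (h * (h * g)) = e.
Proof. rewrite (mulA G h), (mulA G), ghh_eq_invg. apply mulVg. Qed.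

End SquareIsH.
End MorphemeRelations.
End IteratedCommutators.

Section LocalComponents.
Context {G : Group} (S : G -> Prop) (r : nat).
Local Notation "x * y" := (mul G x y).
Local Notation e := (one G).

Lemma is_walk_word_walk v w : Forall S w -> is_walk G (cay_adj G S) (word_walk G v w).
Proof.
  revert v. induction w as [|a w IH]; intros v Hw; simpl; [constructor|].
  apply Forall_inv in Hw as Sa. apply Forall_inv_tail in Hw.
  specialize (IH (v * a) Hw).
  destruct w; simpl in *; constructor; try exact IH; exists a; split; auto.
Qed.

Lemma last_word_walk v w d : last (word_walk G v w) d = v * eval G w.
Proof.
  revert v. induction w as [|a w IH]; intro v; simpl; [symmetry; apply mulg1|].
  rewrite (mulA G), <- IH. destruct w; reflexivity.
Qed.

Lemma wlen_word_walk v w : wlen G (word_walk G v w) = length w.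
Proof.
  unfold wlen. enough (length (word_walk G v w) = 1 + length w) by lia.
  revert v. induction w as [|a w IH]; intro v; simpl; [reflexivity|].
  rewrite IH. reflexivity.
Qed.

Lemma ball_walk_word_walk v w :
  Forall S w -> eval G w = e -> length w <= r -> ball_walk G S r v (word_walk G v w).
Proof.
  intros Hw Hrel Hlen. split; [split|split].
  - apply is_walk_word_walk, Hw.
  - exists v. split; [destruct w; reflexivity|].
    rewrite last_word_walk, Hrel. apply mulg1.
  - rewrite wlen_word_walk. exact Hlen.
  - destruct w; left; reflexivity.
Qed.

Lemma same_comp_sym (V : G -> Prop) (E : G -> G -> Prop) a b :
  (forall x y, E x y -> E y x) -> same_comp G V E a b -> same_comp G V E b a.
Proof.
  intros Esym [Va [Vb Hab]]. split; [exact Vb|split; [exact Va|]].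
  clear Va Vb. induction Hab as [x y [Vx [Vy Exy]]| |x y z _ IHxy _ IHyz].
  - apply rt_step. auto.
  - apply rt_refl.
  - eapply rt_trans; eassumption.
Qed.

Lemma same_comp_trans (V : G -> Prop) (E : G -> G -> Prop) a b c :
  same_comp G V E a b -> same_comp G V E b c -> same_comp G V E a c.
Proof.
  intros [Va [_ Hab]] [_ [Vc Hbc]]. split; [exact Va|split; [exact Vc|]].
  eapply rt_trans; eassumption.
Qed.

Section AvoidingZ.
Variables (v : G) (Z : G -> Prop) (p : list G).
Hypothesis Hp : ball_walk G S r v p.
Local Notation V := (ballV_minus G S r v Z).
Local Notation E := (ballE_minus G S r v Z).

Lemma same_comp_edge l1 a b l2 :
  p = l1 ++ a :: b :: l2 -> ~ Z a -> ~ Z b -> same_comp G V E a b.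
Proof.
  intros Hsplit Za Zb.
  assert (Va : V a).
  { split; [|exact Za]. exists p. split; [exact Hp|].
    rewrite Hsplit. apply in_elt. }
  assert (Vb : V b).
  { split; [|exact Zb]. exists p. split; [exact Hp|].
    rewrite Hsplit. apply in_or_app. right. right. left. reflexivity. }
  split; [exact Va|split; [exact Vb|]]. apply rt_step.
  split; [exact Va|split; [exact Vb|]].
  split; [|auto]. exists p. split; [exact Hp|]. exists l1, l2. left. exact Hsplit.
Qed.

Lemma same_comp_segment l1 a q b l2 :
  p = l1 ++ a :: q ++ b :: l2 ->
  Forall (fun u => ~ Z u) (a :: q ++ [b]) -> same_comp G V E a b.
Proof.
  revert l1 a. induction q as [|c q IH]; intros l1 a Hsplit Hoff;
    apply Forall_inv in Hoff as Za; apply Forall_inv_tail in Hoff.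
  - apply Forall_inv in Hoff. exact (same_comp_edge l1 a b l2 Hsplit Za Hoff).
  - apply same_comp_trans with c.
    + apply (same_comp_edge l1 a c (q ++ b :: l2) Hsplit Za (Forall_inv Hoff)).
    + apply (IH (l1 ++ [a])); [|exact Hoff].
      rewrite <- app_assoc. exact Hsplit.
Qed.

End AvoidingZ.

Lemma not_distinct_comp_of_segment v0 v1 vi p l1 a q b l2 :
  inX G v0 v1 vi -> ball_walk G S r vi p -> p = l1 ++ a :: q ++ b :: l2 ->
  Forall (fun u => ~ inX G v0 v1 u) (a :: q ++ [b]) ->
  ~ distinct_comp G S r v0 v1 b a.
Proof.
  intros Hvi Hp Hsplit Hoff [Nb [Na Hnc]]. apply Hnc.
  split; [exact Nb|split; [exact Na|]]. apply rt_step.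
  split; [exact Nb|split; [exact Na|]]. exists vi. split; [exact Hvi|].
  apply same_comp_sym; [|exact (same_comp_segment vi _ p Hp l1 a q b l2 Hsplit Hoff)].
  intros x y [[p' [Hp' [l1' [l2' Hxy]]]] [Zx Zy]].
  split; [|auto]. exists p'. split; [exact Hp'|]. exists l1', l2'. tauto.
Qed.

End LocalComponents.

Lemma g_gh_invg_notin_1h (G : Group) (g h : G) :
  g <> one G -> g <> h -> mul G g h <> one G ->
  Forall (fun u => ~ inX G (one G) h u) [g; mul G g h; inv G g].
Proof.
  intros Hg Hgh Hgh1.
  repeat constructor; intros [Hu|Hu]; auto.
  - apply Hg, (mulIg h). rewrite Hu, mul1g. reflexivity.
  - apply Hg. rewrite <- (invgK g), Hu. apply invg1.
  - apply Hgh1. rewrite <- Hu. apply mulgV.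
Qed.

Theorem proposition7p1 (Gam : Group) (n : nat) (S : Gam -> Prop) (r : nat) (h : Gam) :
  1 <= n ->
  nilpotent_le Gam n ->
  (forall s, S s -> s <> one Gam) ->
  generating S ->
  2 ^ (n + 2) <= r ->
  S h ->
  local_2sep S r (one Gam) h ->
  (forall v : Gam, ~ local_cutvertex S r v) ->
  mul Gam h h <> one Gam ->
  ~ (exists g, S g /\
       traverses_at S r (one Gam) h g (one Gam) /\
       strongly_traverses S r (one Gam) h [g; h; h] /\
       morpheme S [inv Gam g; h; h; inv Gam g; inv Gam h] /\
       morpheme S [g; h; g; h]).
Proof.
  intros _ Hnil Hne1 _ Hr Sh _ _ _ [g [Sg [Htrav [_ [Hm1 Hm2]]]]].
  destruct Hm1 as [_ [_ [Erel1 _]]]. destruct Hm2 as [_ [_ [Erel2 Hproper]]].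
  simpl in Erel1, Erel2. rewrite mulg1 in Erel1, Erel2.
  assert (Hgh : mul Gam g h <> one Gam).
  { intro E. apply (Hproper [] [g; h] [g; h]); [reflexivity|discriminate|right; discriminate|].
    simpl. rewrite mulg1. exact E. }
  pose proof (Hne1 g Sg) as Hg. pose proof (Hne1 h Sh) as Hh.
  pose proof (not_equivg_of_ne1 Gam g h Erel2 Erel1 Hh Hgh) as Hneq.
  pose proof (sqr_eq_of_itcomm_eq1 Gam g h Erel2 Erel1 (n - 1) (Hnil g h Hneq)) as Hsq.
  pose proof (ghh_eq_invg Gam g h Erel2 Erel1 Hsq) as Hghh.
  pose proof (ghhg_eq1 Gam g h Erel2 Erel1 Hsq) as Hrelator.
  assert (Hr4 : 4 <= r).
  { apply Nat.le_trans with (2 ^ (n + 2)); [apply (Nat.pow_le_mono_r 2 2)|]; lia. }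
  assert (Hwalk : word_walk Gam (one Gam) [g; h; h; g] =
                  [one Gam; g; mul Gam g h; inv Gam g; one Gam]).
  { simpl. rewrite !mul1g, <- !(mulA Gam), Hghh, Hrelator. reflexivity. }
  unfold traverses_at in Htrav. rewrite !mul1g in Htrav. revert Htrav.
  apply (not_distinct_comp_of_segment S r (one Gam) h (one Gam)
           (word_walk Gam (one Gam) [g; h; h; g]) [one Gam] g [mul Gam g h] (inv Gam g)
           [one Gam] (or_introl eq_refl)); [|exact Hwalk|].
  - apply ball_walk_word_walk; [repeat constructor; assumption| |simpl; lia].
    simpl. rewrite mulg1. exact Hrelator.
  - apply g_gh_invg_notin_1h; auto. intro E. apply Hneq. left. exact E.
Qed.
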